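(* Let $C, A \subseteq \omega$ with $A \not\leq_T C$. Then every condition has an acceptable part. Moreover, for every condition $c$ and every $m \in \omega$ there is a condition $d$ extending $c$ such that $d$ forces $Q_m$ on each of its acceptable parts.
   Context: Fix sets $C, A \subseteq \omega$. For $\sigma \in 2^{<\omega}$ and $X \in 2^\omega$ (or a string of length at least $|\sigma|$), $X/\sigma$ denotes the result of replacing the first $|\sigma|$ bits of $X$ by $\sigma$; strings and elements of $2^\omega$ are identified with (finite or infinite) subsets of $\omega$. A Mathias condition is a pair $(\sigma, X)$ with $\sigma \in 2^{<\omega}$, $X \in 2^\omega$; $(\tau,Y)$ extends $(\sigma,X)$ if $\sigma \preceq \tau$ and $Y/\tau \subseteq X/\sigma$; a set $G$ satisfies $(\sigma,X)$ if $\sigma \prec G$ and $G \subseteq X/\sigma$. A set $X = X_0 \oplus \cdots \oplus X_{k-1}$ codes an ordered $k$-partition of $\omega$ if $\bigcup_{i<k} X_i = \omega$ (the parts need not be disjoint). A condition is a tuple $c = (k, \sigma_0, \ldots, \sigma_{k-1}, P)$ with $k > 0$, each $\sigma_i \in 2^{<\omega}$, and $P$ a non-empty $\Pi^{0,C}_1$ class each of whose members codes an ordered $k$-partition of $\omega$. A condition $d = (m, \tau_0,\ldots,\tau_{m-1}, Q)$ extends $c$ if there is a function $f : m \to k$ such that for every $Y_0 \oplus \cdots \oplus Y_{m-1} \in Q$ there is $X_0 \oplus \cdots \oplus X_{k-1} \in P$ such that for each $i<m$ the Mathias condition $(\tau_i, Y_i)$ extends $(\sigma_{f(i)}, X_{f(i)})$.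 A set $G$ satisfies $c$ on part $i$ if there is $X_0\oplus\cdots\oplus X_{k-1} \in P$ with $G$ satisfying $(\sigma_i, X_i)$. Part $i$ of $c$ is acceptable if there is $X_0 \oplus \cdots \oplus X_{k-1} \in P$ such that $X_i \cap A$ and $X_i \cap \overline{A}$ are both infinite. The condition $c$ forces $Q_m$ on part $i$ if $|\sigma_i \cap A| \geq m$ and $|\sigma_i \cap \overline{A}| \geq m$ (with $\sigma_i$ viewed as a finite set). *)

From mathcomp Require Import all_boot.
Set Implicit Arguments. Unset Strict Implicit. Unset Printing Implicit Defensive.

Inductive code : Type :=
| CZero : code
| CSucc : code
| CProj : nat -> code
| COracle : code
| CComp : code -> list code -> code
| CPrec : code -> code -> code
| CMu : code -> code.

Inductive eval (O : nat -> bool) : code -> seq nat -> nat -> Prop :=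
| ev_zero xs : eval O CZero xs 0
| ev_succ xs : eval O CSucc xs (head 0 xs).+1
| ev_proj i xs : eval O (CProj i) xs (nth 0 xs i)
| ev_oracle xs : eval O COracle xs (if O (head 0 xs) then 1 else 0)
| ev_comp f gs xs ys y :
    evals O gs xs ys -> eval O f ys y -> eval O (CComp f gs) xs y
| ev_prec0 f g xs y : eval O f xs y -> eval O (CPrec f g) (0 :: xs) y
| ev_precS f g n xs r y :
    eval O (CPrec f g) (n :: xs) r -> eval O g (n :: r :: xs) y ->
    eval O (CPrec f g) (n.+1 :: xs) y
| ev_mu f xs n :
    eval O f (n :: xs) 0 ->
    (forall j, j < n -> exists v, v <> 0 /\ eval O f (j :: xs) v) ->
    eval O (CMu f) xs n
with evals (O : nat -> bool) : list code -> seq nat -> seq nat -> Prop :=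
| evs_nil xs : evals O nil xs [::]
| evs_cons g gs xs y ys :
    eval O g xs y -> evals O gs xs ys -> evals O (g :: gs) xs (y :: ys).

Definition turing_le (A C : nat -> bool) : Prop :=
  exists c : code, forall n, eval C c [:: n] (if A n then 1 else 0).

(* Bijective coding of binary strings by natural numbers. *)
Fixpoint str_code (s : seq bool) : nat :=
  match s with
  | [::] => 0
  | b :: s' => (str_code s').*2 + (b : nat).+1
  end.

Definition restr (X : nat -> bool) (n : nat) : seq bool := mkseq X n.

Definition str_computable (C : nat -> bool) (R : seq bool -> bool) : Prop :=
  exists c : code, forall s, eval C c [:: str_code s] (if R s then 1 else 0).

Definition Pi01 (C : nat -> bool) (P : (nat -> bool) -> Prop) : Prop :=
  exists R : seq bool -> bool, str_computable C R /\
    forall X, P X <-> (forall n, R (restr X n)).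

Definition replace (X : nat -> bool) (s : seq bool) : nat -> bool :=
  fun n => if n < size s then nth false s n else X n.

Definition subset (X Y : nat -> bool) : Prop := forall n, X n -> Y n.

Definition mathias_ext (tau : seq bool) (Y : nat -> bool)
  (sigma : seq bool) (X : nat -> bool) : Prop :=
  prefix sigma tau /\ subset (replace Y tau) (replace X sigma).

Definition mathias_sat (G : nat -> bool) (sigma : seq bool) (X : nat -> bool) : Prop :=
  prefix sigma (restr G (size sigma)) /\ subset G (replace X sigma).

(* X = X_0 (+) ... (+) X_{k-1}, with X_i = {n | k*n + i \in X} *)
Definition part (k : nat) (X : nat -> bool) (i : nat) : nat -> bool :=
  fun n => X (k * n + i).

Definition codes_partition (k : nat) (X : nat -> bool) : Prop :=
  forall n, exists2 i, i < k & part k X i n.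

(* (k, sigma_0, ..., sigma_{k-1}, P); only sigma i for i < k is relevant *)
Record cond := Cond {
  ck : nat;
  csig : nat -> seq bool;
  cP : (nat -> bool) -> Prop }.

Definition is_cond (C : nat -> bool) (c : cond) : Prop :=
  0 < ck c /\ Pi01 C (cP c) /\ (exists X, cP c X) /\
  (forall X, cP c X -> codes_partition (ck c) X).

Definition cond_ext (d c : cond) : Prop :=
  exists f : nat -> nat, (forall i, i < ck d -> f i < ck c) /\
    forall Y, cP d Y -> exists2 X, cP c X &
      forall i, i < ck d ->
        mathias_ext (csig d i) (part (ck d) Y i) (csig c (f i)) (part (ck c) X (f i)).

Definition sat_on_part (G : nat -> bool) (c : cond) (i : nat) : Prop :=
  exists2 X, cP c X & mathias_sat G (csig c i) (part (ck c) X i).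

Definition infinite_set (X : nat -> bool) : Prop := forall N, exists2 n, N <= n & X n.

Definition acceptable (A : nat -> bool) (c : cond) (i : nat) : Prop :=
  i < ck c /\ exists2 X, cP c X &
    infinite_set (fun n => part (ck c) X i n && A n) /\
    infinite_set (fun n => part (ck c) X i n && ~~ A n).

(* |sigma \cap A|, sigma viewed as a finite set *)
Definition card_in (s : seq bool) (A : nat -> bool) : nat :=
  count (fun n => nth false s n && A n) (iota 0 (size s)).

Definition forces_Q (A : nat -> bool) (m : nat) (c : cond) (i : nat) : Prop :=
  m <= card_in (csig c i) A /\ m <= card_in (csig c i) (fun n => ~~ A n).

From Pilot Require Import Defs.
From mathcomp Require Import all_boot zify.
From Stdlib Require Import Classical ClassicalEpsilon.
Set Implicit Arguments. Unset Strict Implicit. Unset Printing Implicit Defensive.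

(* If no part of c = (k, sigma, P) is acceptable, then for every X in P and every i < k one of
   X_i /\ A, X_i /\ ~A is finite, so from some point M on, A coincides with the union of the
   parts X_i listed in some finite T.  These countably many closed conditions on X cover P, so
   by the Baire category theorem one of them holds on a nonempty piece P /\ [sigma], which is
   again a Pi^0_1(C) class.  By compactness, for each n >= M a C-computable search finds a length
   up to which all strings admissible for that class agree on whether n lies in the union of
   the parts in T; this decides A(n), so A <=_T C.
   The refinement is done part by part: if X_i /\ A and X_i /\ ~A are infinite, append to
   sigma_i enough bits of X_i to contain m elements of each, and keep only the members of P
   agreeing with X on these positions, which is still a Pi^0_1(C) class. *)

(* [str_code (b :: s)] is [2 * str_code s + b + 1], so [code_tail] removes the first bit. *)
Definition code_tail (c : nat) : nat := c.-1./2.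

Lemma code_tail_cons b s : code_tail (str_code (b :: s)) = str_code s.
Proof. by rewrite /code_tail /= addnS /= addnC half_bit_double. Qed.

Lemma str_code_eq0 s : (str_code s == 0) = (s == [::]).
Proof. by case: s => [|b s] //=; rewrite addnS. Qed.

Lemma str_code_inj : injective str_code.
Proof.
elim=> [|b s IH] [|b' s'] e //; try by move: e => /=; rewrite addnS.
have := congr1 code_tail e; rewrite !code_tail_cons => /IH es; subst s'.
have := congr1 (fun x => odd x.-1) e; rewrite /= !addnS /= !oddD !odd_double /=.
by move: e; case: b; case: b'.
Qed.

Lemma str_code_surj n : exists s, str_code s == n.
Proof.
elim/ltn_ind: n => [[|n]] IH; first by exists [::].
have [|s /eqP hs] := IH n./2; first by rewrite ltnS -{2}(odd_double_half n); lia.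
by exists (odd n :: s); rewrite /= hs addnS addnC odd_double_half.
Qed.

Definition str_decode (n : nat) : seq bool := xchoose (str_code_surj n).

Lemma str_decodeK : cancel str_decode str_code.
Proof. by move=> n; apply/eqP/(xchooseP (str_code_surj n)). Qed.

Lemma str_codeK : cancel str_code str_decode.
Proof. by move=> s; apply: str_code_inj; rewrite str_decodeK. Qed.

Definition code_drop (c j : nat) : nat := iter j code_tail c.

Lemma code_drop_str s j : code_drop (str_code s) j = str_code (drop j s).
Proof.
elim: j s => [|j IH] s; first by rewrite drop0.
rewrite /code_drop iterSr; case: s => [|b s] /=; first exact: (IH [::]).
by rewrite code_tail_cons; apply: IH.
Qed.

Lemma str_code_cat_take_drop s j :
  str_code s = str_code (take j s) + 2 ^ j * str_code (drop j s).
Proof.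
elim: s j => [|b s IH] [|j] /=; rewrite ?muln0 ?mul1n //.
by rewrite (IH j) expnS; lia.
Qed.

Lemma str_code_take s j :
  str_code (take j s) = str_code s - 2 ^ j * str_code (drop j s).
Proof. by rewrite [in RHS](str_code_cat_take_drop s j) addnK. Qed.

Lemma nth_str_code s j :
  nth false s j = (str_code (drop j s) != 0) && odd (str_code (drop j s)).-1.
Proof.
rewrite str_code_eq0; case: (ltnP j (size s)) => hj; last first.
  by rewrite drop_oversize // nth_default.
by rewrite (drop_nth false hj) /= addnS /= oddD odd_double /=; case: nth.
Qed.

Lemma size_eq_drop (s : seq bool) L :
  (size s == L) = (drop L s == [::]) && ((L == 0) || (drop L.-1 s != [::])).
Proof. by rewrite -!size_eq0 !size_drop; case: L => [|L] /=; lia. Qed.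

Lemma str_code_lt s : str_code s < 2 ^ (size s).+1.
Proof.
suff : (str_code s).+2 <= 2 ^ (size s).+1 by lia.
elim: s => [|b s IH] //=; rewrite [2 ^ _]expnS.
have hb : (b : nat) <= 1 by case: b.
by move: IH hb; set X := 2 ^ _; lia.
Qed.

Section OracleComputable.
Variable O : nat -> bool.

Definition computes (c : code) (F : seq nat -> nat) : Prop := forall xs, eval O c xs (F xs).
Definition computable (F : seq nat -> nat) : Prop := exists c, computes c F.
Definition computable_pred (P : seq nat -> bool) : Prop := computable (fun xs => P xs).

Lemma computable_ext F G : F =1 G -> computable F -> computable G.
Proof. by move=> eFG [c hc]; exists c => xs; rewrite -eFG. Qed.

Lemma computable_pred_ext P Q : P =1 Q -> computable_pred P -> computable_pred Q.
Proof. by move=> ePQ; apply: computable_ext => xs; rewrite ePQ. Qed.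

Lemma computable_arg i : computable (fun xs => nth 0 xs i).
Proof. by exists (CProj i) => xs; apply: ev_proj. Qed.

Lemma computable_comp F Gs : computable F -> List.Forall computable Gs ->
  computable (fun xs => F [seq G xs | G <- Gs]).
Proof.
move=> [f hf] hGs.
have [gs hgs] : exists gs, forall xs, evals O gs xs [seq G xs | G <- Gs].
  elim: hGs => [|G Gs' [g hg] _ [gs hgs]]; first by exists nil => xs; apply: evs_nil.
  by exists (g :: gs) => xs; apply: evs_cons.
by exists (CComp f gs) => xs; apply: ev_comp (hgs xs) (hf _).
Qed.

Lemma computable_comp1 F G : computable F -> computable G ->
  computable (fun xs => F [:: G xs]).
Proof. by move=> hF hG; apply: (@computable_comp F [:: G] hF); repeat constructor. Qed.

Lemma computable_comp2 F G H : computable F -> computable G -> computable H ->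
  computable (fun xs => F [:: G xs; H xs]).
Proof. by move=> hF hG hH; apply: (@computable_comp F [:: G; H] hF); repeat constructor. Qed.

Lemma computable_const n : computable (fun=> n).
Proof.
elim: n => [|n [c hc]]; first by exists CZero => xs; apply: ev_zero.
by exists (CComp CSucc [:: c]) => xs; apply: ev_comp (evs_cons (hc xs) (evs_nil _ _)) (ev_succ _ _).
Qed.

Lemma computable_succ F : computable F -> computable (fun xs => (F xs).+1).
Proof.
have hS : computable (fun xs => (head 0 xs).+1) by exists CSucc => xs; apply: ev_succ.
by move=> hF; apply: computable_ext (computable_comp1 hS hF).
Qed.

Fixpoint prec_fun (F G : seq nat -> nat) (n : nat) (ys : seq nat) : nat :=
  if n is n'.+1 then G (n' :: prec_fun F G n' ys :: ys) else F ys.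

(* [CPrec] has no evaluation rule on the empty argument list, so the recursion variable [B xs]
   is always passed, followed by the arguments selected by [l]. *)
Lemma computable_prec l B F G : computable B -> computable F -> computable G ->
  computable (fun xs => prec_fun F G (B xs) (map (nth 0 xs) l)).
Proof.
move=> [b hb] [f hf] [g hg].
have hargs xs : evals O (map CProj l) xs (map (nth 0 xs) l).
  by elim: l => [|i l IH]; [apply: evs_nil | apply: evs_cons (ev_proj _ _ _) IH].
have hrec n ys : eval O (CPrec f g) (n :: ys) (prec_fun F G n ys).
  by elim: n => [|n IH] /=; [apply: ev_prec0 | apply: ev_precS IH (hg _)].
by exists (CComp (CPrec f g) (b :: map CProj l)) => xs;
  apply: ev_comp (evs_cons (hb xs) (hargs xs)) (hrec _ _).
Qed.

Lemma computable_lift1 op : computable (fun xs => op (nth 0 xs 0)) ->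
  forall F, computable F -> computable (fun xs => op (F xs)).
Proof. by move=> hop F hF; apply: computable_ext (computable_comp1 hop hF). Qed.

Lemma computable_lift2 op : computable (fun xs => op (nth 0 xs 0) (nth 0 xs 1)) ->
  forall F G, computable F -> computable G -> computable (fun xs => op (F xs) (G xs)).
Proof. by move=> hop F G hF hG; apply: computable_ext (computable_comp2 hop hF hG). Qed.

Lemma computable_add F G : computable F -> computable G -> computable (fun xs => F xs + G xs).
Proof.
apply: computable_lift2; apply: computable_ext
  (computable_prec [:: 1] (computable_arg 0) (computable_arg 0)
    (computable_succ (computable_arg 1))).
by move=> xs; elim: (nth 0 xs 0) => //= n ->.
Qed.

Lemma computable_mul F G : computable F -> computable G -> computable (fun xs => F xs * G xs).
Proof.
apply: computable_lift2; apply: computable_ext (computable_prec [:: 1] (computable_arg 0)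
  (computable_const 0) (computable_add (computable_arg 1) (computable_arg 2))).
by move=> xs; elim: (nth 0 xs 0) => //= n ->; rewrite mulSn addnC.
Qed.

Lemma computable_predn F : computable F -> computable (fun xs => (F xs).-1).
Proof.
apply: computable_lift1; apply: computable_ext
  (computable_prec [::] (computable_arg 0) (computable_const 0) (computable_arg 0)).
by move=> xs; case: (nth 0 xs 0).
Qed.

Lemma computable_sub F G : computable F -> computable G -> computable (fun xs => F xs - G xs).
Proof.
apply: computable_lift2; apply: computable_ext (computable_prec [:: 0] (computable_arg 1)
  (computable_arg 0) (computable_predn (computable_arg 1))).
by move=> xs; elim: (nth 0 xs 1) => [|n /= ->]; rewrite ?subn0 ?subnS.
Qed.

Lemma computable_exp2 F : computable F -> computable (fun xs => 2 ^ F xs).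
Proof.
apply: computable_lift1; apply: computable_ext (computable_prec [::] (computable_arg 0)
  (computable_const 1) (computable_add (computable_arg 1) (computable_arg 1))).
by move=> xs; elim: (nth 0 xs 0) => //= n ->; rewrite expnS mul2n addnn.
Qed.

Lemma computable_eq0 F : computable F -> computable_pred (fun xs => F xs == 0).
Proof.
apply: (computable_lift1 (op := fun n => nat_of_bool (n == 0))); apply: computable_ext
  (computable_prec [::] (computable_arg 0) (computable_const 1) (computable_const 0)).
by move=> xs; case: (nth 0 xs 0).
Qed.

Lemma computable_bool b : computable_pred (fun=> b).
Proof. exact: computable_const. Qed.

Lemma computable_negb P : computable_pred P -> computable_pred (fun xs => ~~ P xs).
Proof. by move/computable_eq0; apply: computable_pred_ext => xs; case: (P xs). Qed.

Lemma computable_andb P Q : computable_pred P -> computable_pred Q ->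
  computable_pred (fun xs => P xs && Q xs).
Proof. by move=> hP hQ; apply: computable_ext (computable_mul hP hQ) => xs; rewrite mulnb. Qed.

Lemma computable_orb P Q : computable_pred P -> computable_pred Q ->
  computable_pred (fun xs => P xs || Q xs).
Proof.
move=> hP hQ; apply: computable_pred_ext (computable_negb (computable_andb
  (computable_negb hP) (computable_negb hQ))) => xs.
by rewrite negb_and !negbK.
Qed.

Lemma computable_implyb P Q : computable_pred P -> computable_pred Q ->
  computable_pred (fun xs => P xs ==> Q xs).
Proof.
move=> hP hQ; apply: computable_pred_ext (computable_orb (computable_negb hP) hQ) => xs.
by rewrite implybE.
Qed.

Lemma computable_leq F G : computable F -> computable G ->
  computable_pred (fun xs => F xs <= G xs).
Proof.
move=> hF hG; apply: computable_pred_ext (computable_eq0 (computable_sub hF hG)) => xs.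
by rewrite subn_eq0.
Qed.

Lemma computable_ltn F G : computable F -> computable G ->
  computable_pred (fun xs => F xs < G xs).
Proof. by move/computable_succ; apply: computable_leq. Qed.

Lemma computable_eqn F G : computable F -> computable G ->
  computable_pred (fun xs => F xs == G xs).
Proof.
move=> hF hG; apply: computable_pred_ext
  (computable_andb (computable_leq hF hG) (computable_leq hG hF)) => xs.
by rewrite eqn_leq.
Qed.

Lemma computable_eqb P Q : computable_pred P -> computable_pred Q ->
  computable_pred (fun xs => P xs == Q xs).
Proof.
move=> hP hQ; apply: computable_pred_ext (computable_eqn hP hQ) => xs.
by case: (P xs); case: (Q xs).
Qed.

Lemma computable_odd F : computable F -> computable_pred (fun xs => odd (F xs)).
Proof.
apply: (computable_lift1 (op := fun n => nat_of_bool (odd n))); apply: computable_ext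
  (computable_prec [::] (computable_arg 0) (computable_const 0)
    (computable_eq0 (computable_arg 1))).
by move=> xs; elim: (nth 0 xs 0) => //= n ->; case: odd.
Qed.

Lemma computable_half F : computable F -> computable (fun xs => (F xs)./2).
Proof.
apply: computable_lift1; apply: computable_ext (computable_prec [::] (computable_arg 0)
  (computable_const 0) (computable_add (computable_arg 1) (computable_odd (computable_arg 0)))).
by move=> xs; elim: (nth 0 xs 0) => //= n ->; rewrite uphalf_half addnC.
Qed.

Lemma computable_select P l : computable_pred P ->
  computable_pred (fun xs => P (map (nth 0 xs) l)).
Proof.
move=> hP; have hl : List.Forall computable [seq nth 0^~ i | i <- l].
  by apply/List.Forall_forall => G /List.in_map_iff [i [<- _]]; apply: computable_arg.
by apply: computable_ext (computable_comp hP hl) => xs; rewrite -map_comp.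
Qed.

Lemma computable_has T (l : seq T) (P : T -> seq nat -> bool) :
  (forall a, computable_pred (P a)) -> computable_pred (fun xs => has (P^~ xs) l).
Proof.
move=> hP; elim: l => [|a l IH] /=; first exact: computable_bool.
exact: computable_orb (hP a) IH.
Qed.

Lemma computable_all T (l : seq T) (P : T -> seq nat -> bool) :
  (forall a, computable_pred (P a)) -> computable_pred (fun xs => all (P^~ xs) l).
Proof.
move=> hP; elim: l => [|a l IH] /=; first exact: computable_bool.
exact: computable_andb (hP a) IH.
Qed.

Lemma computable_all_iota a B P : computable B -> computable_pred P ->
  computable_pred (fun xs => all (fun i => P (i :: map (nth 0 xs) (iota 0 a))) (iota 0 (B xs))).
Proof.
move=> hB hP.
have hstep : computable_pred (fun zs => (nth 0 zs 1 == 1) && P (map (nth 0 zs) (0 :: iota 2 a))).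
  exact: computable_andb (computable_eqn (computable_arg 1) (computable_const 1))
    (computable_select _ hP).
apply: computable_ext (computable_prec (iota 0 a) hB (computable_bool true) hstep) => xs.
set ps := map _ (iota 0 a).
have hps n acc : map (nth 0 [:: n, acc & ps]) (iota 2 a) = ps.
  rewrite (iotaDl 2 0) -map_comp.
  have -> : a = size ps by rewrite size_map size_iota.
  by rewrite map_nth_iota0 ?take_size.
elim: (B xs) => // n IH; rewrite [LHS]/= IH hps -[in RHS]addn1 iotaD all_cat /= add0n andbT.
by case: all.
Qed.

Lemma computable_search (P : nat -> seq nat -> bool) :
  computable_pred (fun xs => P (nth 0 xs 0) (behead xs)) -> (forall ys, exists n, P n ys) ->
  exists2 F, computable F & forall ys, P (F ys) ys.
Proof.
move=> /computable_negb [f hf] hex.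
exists (fun ys => ex_minn (hex ys)); last by move=> ys; case: ex_minnP.
exists (CMu f) => ys; case: ex_minnP => n hn hmin; apply: ev_mu.
  by have := hf (n :: ys); rewrite /= hn.
move=> j hj; exists 1; split=> //; have := hf (j :: ys).
by case e: (P j ys) => //; have := hmin j e; rewrite leqNgt hj.
Qed.

Lemma computable_patch M Q P : computable_pred P ->
  computable_pred (fun xs => if nth 0 xs 0 < M then Q (nth 0 xs 0) else P xs).
Proof.
move=> hP; have hx0 := computable_arg 0.
have htab := computable_has (iota 0 M)
  (fun j => computable_andb (computable_eqn hx0 (computable_const j)) (computable_bool (Q j))).
apply: computable_pred_ext (computable_orb htab
  (computable_andb (computable_negb (computable_ltn hx0 (computable_const M))) hP)) => xs /=.
case: ltnP => hM /=; rewrite ?orbF; last first.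
  case: hasP => // -[j]; rewrite mem_iota => /andP[_ hj] /andP[/eqP hx _]; lia.
apply/hasP/idP => [[j _ /andP[/eqP -> //]] | hQ].
by exists (nth 0 xs 0); rewrite ?mem_iota ?eqxx.
Qed.

Lemma computable_code_drop F G : computable F -> computable G ->
  computable (fun xs => code_drop (F xs) (G xs)).
Proof.
apply: computable_lift2; apply: computable_ext (computable_prec [:: 0] (computable_arg 1)
  (computable_arg 0) (computable_half (computable_predn (computable_arg 1)))).
by move=> xs; rewrite /code_drop; elim: (nth 0 xs 1) => //= j ->.
Qed.

Section DecodedStrings.
Variables F G : seq nat -> nat.
Hypotheses (hF : computable F) (hG : computable G).

Lemma computable_str_drop : computable (fun xs => str_code (drop (G xs) (str_decode (F xs)))).
Proof.
by apply: computable_ext (computable_code_drop hF hG) => xs; rewrite -code_drop_str str_decodeK.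
Qed.

Lemma computable_str_nth : computable_pred (fun xs => nth false (str_decode (F xs)) (G xs)).
Proof.
apply: computable_pred_ext (computable_andb (computable_negb (computable_eq0 computable_str_drop))
  (computable_odd (computable_predn computable_str_drop))) => xs.
by rewrite nth_str_code.
Qed.

Lemma computable_str_take : computable (fun xs => str_code (take (G xs) (str_decode (F xs)))).
Proof.
apply: computable_ext
  (computable_sub hF (computable_mul (computable_exp2 hG) computable_str_drop)) => xs.
by rewrite str_code_take str_decodeK.
Qed.

Lemma computable_str_size_eq : computable_pred (fun xs => size (str_decode (F xs)) == G xs).
Proof.
have hdrop_pred : computable (fun xs => str_code (drop (G xs).-1 (str_decode (F xs)))).
  by apply: computable_ext (computable_code_drop hF (computable_predn hG)) => xs;
    rewrite -code_drop_str str_decodeK.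
apply: computable_pred_ext (computable_andb (computable_eq0 computable_str_drop)
  (computable_orb (computable_eq0 hG) (computable_negb (computable_eq0 hdrop_pred)))) => xs.
by rewrite size_eq_drop !str_code_eq0.
Qed.

End DecodedStrings.

Lemma str_computable_pred R F : str_computable O R -> computable F ->
  computable_pred (fun xs => R (str_decode (F xs))).
Proof.
move=> [c hc] hF; have hR : computable_pred (fun xs => R (str_decode (nth 0 xs 0))).
  exists (CComp c [:: CProj 0]) => xs.
  apply: ev_comp (evs_cons (ev_proj _ _ _) (evs_nil _ _)) _.
  by have := hc (str_decode (nth 0 xs 0)); rewrite str_decodeK; case: (R _).
exact: (computable_lift1 (op := fun n => nat_of_bool (R (str_decode n))) hR hF).
Qed.

Lemma computable_str_computable R :
  computable_pred (fun xs => R (str_decode (nth 0 xs 0))) -> str_computable O R.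
Proof.
by move=> [c hc]; exists c => s; have := hc [:: str_code s]; rewrite /= str_codeK; case: (R s).
Qed.

End OracleComputable.

Lemma computable_turing_le A C : computable_pred C (fun xs => A (nth 0 xs 0)) -> turing_le A C.
Proof. by move=> [c hc]; exists c => n; have := hc [:: n]; case: (A n). Qed.

Lemma all_codes_sizeP (Q : seq bool -> bool) L :
  reflect (forall t, size t = L -> Q t)
    (all (fun x => (size (str_decode x) == L) ==> Q (str_decode x)) (iota 0 (2 ^ L.+1))).
Proof.
apply: (iffP allP) => [h t ht | h x _]; last by apply/implyP => /eqP /h.
have := h (str_code t); rewrite mem_iota -ht str_code_lt str_codeK ht eqxx.
by move=> /(_ isT).
Qed.

Definition pbool (P : Prop) : bool := if excluded_middle_informative P then true else false.

Lemma pboolP P : reflect P (pbool P).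
Proof. by rewrite /pbool; case: excluded_middle_informative => h; constructor. Qed.

Lemma size_restr X n : size (restr X n) = n.
Proof. exact: size_mkseq. Qed.

Lemma nth_restr X n j : j < n -> nth false (restr X n) j = X j.
Proof. exact: nth_mkseq. Qed.

Lemma take_restr X j n : j <= n -> take j (restr X n) = restr X j.
Proof.
move=> hj; apply: (@eq_from_nth _ false); first by rewrite size_takel ?size_restr.
move=> i; rewrite size_takel ?size_restr // => hi.
by rewrite nth_take // !nth_restr //; lia.
Qed.

Definition consistent (cs : seq (nat * bool)) (s : seq bool) : bool :=
  all (fun p => (size s <= p.1) || (nth false s p.1 == p.2)) cs.

Definition agrees (cs : seq (nat * bool)) (Y : nat -> bool) : bool :=
  all (fun p => Y p.1 == p.2) cs.

Lemma consistent_restr cs Y :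
  (forall n, consistent cs (restr Y n)) <-> agrees cs Y.
Proof.
split=> [h | /allP h n].
  apply/allP => p hp; have /allP /(_ p hp) := h p.1.+1.
  by rewrite size_restr ltnn nth_restr.
apply/allP => p /h /eqP <-; rewrite size_restr.
by case: leqP => //= hp; rewrite nth_restr.
Qed.

Lemma computable_consistent O cs F : computable O F ->
  computable_pred O (fun xs => consistent cs (str_decode (F xs))).
Proof.
move=> hF; apply: computable_all => p.
have hp1 := computable_const O p.1.
apply: computable_pred_ext (computable_orb (computable_eq0 (computable_str_drop hF hp1))
  (computable_eqb (computable_str_nth hF hp1) (computable_bool O p.2))) => xs.
by rewrite str_code_eq0 -size_eq0 size_drop subn_eq0.
Qed.

Lemma Pi01_agrees C P cs : Pi01 C P -> Pi01 C (fun Y => P Y /\ agrees cs Y).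
Proof.
move=> [R [hR hP]]; exists (fun s => R s && consistent cs s); split.
  apply: computable_str_computable; have hx0 := computable_arg C 0.
  exact: computable_andb (str_computable_pred hR hx0) (computable_consistent cs hx0).
move=> Y; rewrite hP -consistent_restr; split=> [[h1 h2] n | h]; first by rewrite h1 h2.
by split=> n; have /andP[] := h n.
Qed.

Lemma nth_prefix (s t : seq bool) j : prefix s t -> j < size s -> nth false t j = nth false s j.
Proof. by move=> /prefixP[u ->] hj; rewrite nth_cat hj. Qed.

Lemma prefix_take_take (t : seq bool) i j : i <= j -> prefix (take i t) (take j t).
Proof. by move=> hij; rewrite -(take_takel t hij) prefix_take. Qed.

Lemma prefix_restr Y i j : i <= j -> prefix (restr Y i) (restr Y j).
Proof. by move=> hij; rewrite -(take_restr Y hij) prefix_take. Qed.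

Lemma restr_prefix Y (s : seq bool) :
  restr Y (size s) = s -> forall n, n <= size s -> restr Y n = take n s.
Proof. by move=> hY n hn; rewrite -hY take_restr. Qed.

Section Konig.
Variable B : seq bool -> Prop.
Hypothesis B_take : forall t j, B t -> B (take j t).
Hypothesis B_level : forall L, exists2 t, size t = L & B t.

Let extendable s := forall L, exists t, [/\ size t = size s + L, B t & prefix s t].

Let extendable_rcons s :
  extendable s -> extendable (rcons s false) \/ extendable (rcons s true).
Proof.
move=> hs; apply: NNPP => /not_or_and[/not_all_ex_not[L0 h0] /not_all_ex_not[L1 h1]].
have [t [st Bt st_t]] := hs (L0 + L1).+1.
have hlt : size s < size t by rewrite st; lia.
have ht : take (size s).+1 t = rcons s (nth false t (size s)).
  by rewrite (take_nth false hlt); move: st_t; rewrite prefixE => /eqP ->.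
have hext L : L <= L0 + L1 -> exists t',
    [/\ size t' = size (rcons s (nth false t (size s))) + L, B t'
       & prefix (rcons s (nth false t (size s))) t'].
  move=> hL; exists (take ((size s).+1 + L) t); rewrite size_rcons size_takel; last lia.
  by split=> //; [exact: B_take | rewrite -ht; apply: prefix_take_take; lia].
by case: (nth false t (size s)) hext => hext; [apply: h1 | apply: h0]; apply: hext; lia.
Qed.

Let path_seq := fix path_seq n :=
  if n is n'.+1 then rcons (path_seq n') (pbool (extendable (rcons (path_seq n') true)))
  else [::].

Let path_seq_extendable n : extendable (path_seq n).
Proof.
elim: n => [|n IH] /=.
  by move=> L; have [t st Bt] := B_level L; exists t; rewrite prefix0s.
by case: pboolP => // hn; case: (extendable_rcons IH).
Qed.

Let size_path_seq n : size (path_seq n) = n.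
Proof. by elim: n => //= n IH; rewrite size_rcons IH. Qed.

Lemma konig : exists Y, forall n, B (restr Y n).
Proof.
exists (fun j => nth false (path_seq j.+1) j) => n.
have -> : restr (fun j => nth false (path_seq j.+1) j) n = path_seq n.
  elim: n => // n IH; rewrite /restr mkseqS -/(restr _ n) IH /=.
  by rewrite nth_rcons size_path_seq ltnn eqxx.
have [t [st Bt]] := path_seq_extendable n 0.
by rewrite prefixE addn0 in st * => /eqP <-; rewrite -st take_size.
Qed.

End Konig.

Lemma chain_limit (sq : nat -> seq bool) :
  (forall N, prefix (sq N) (sq N.+1) /\ size (sq N) < size (sq N.+1)) ->
  exists Y, forall N, restr Y (size (sq N)) = sq N.
Proof.
move=> hsq; have hpre N N' : N <= N' -> prefix (sq N) (sq N').
  elim: N' => [|N' IH]; first by rewrite leqn0 => /eqP ->; apply: prefix_refl.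
  rewrite leq_eqVlt ltnS => /orP[/eqP -> | /IH h]; first exact: prefix_refl.
  exact: prefix_trans h (hsq N').1.
have hsize N : N <= size (sq N) by elim: N => // N IH; have := (hsq N).2; lia.
exists (fun j => nth false (sq j.+1) j) => N.
apply: (@eq_from_nth _ false); rewrite size_restr // => j hj; rewrite nth_restr //.
case: (leqP N j.+1) => hN; first exact: nth_prefix (hpre _ _ hN) hj.
by rewrite (nth_prefix (hpre _ _ (ltnW hN))) //; have := hsize j.+1; lia.
Qed.

Section Baire.
Variables (P : (nat -> bool) -> Prop) (R : seq bool -> bool).
Variable G : nat -> (nat -> bool) -> Prop.
Hypothesis hP : forall X, P X <-> forall n, R (restr X n).
Hypothesis P_nonempty : exists X, P X.
Hypothesis G_cover : forall X, P X -> exists N, G N X.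
Hypothesis G_closed : forall N Y, ~ G N Y ->
  exists L, forall Z, restr Z L = restr Y L -> ~ G N Z.

Definition meets (s : seq bool) := exists2 Y, P Y & restr Y (size s) = s.

Lemma baire_category :
  exists s N, meets s /\ forall Y, P Y -> restr Y (size s) = s -> G N Y.
Proof.
(* Otherwise choose cylinders meeting P, the N-th one avoiding G N; their limit is in P
   but in no G N. *)
apply: NNPP => hno.
have avoid N s : meets s -> exists t, [/\ prefix s t /\ size s < size t, meets t &
    forall Z, restr Z (size t) = t -> ~ G N Z].
  move=> hs; have [Y hY] : exists Y, [/\ P Y, restr Y (size s) = s & ~ G N Y].
    apply: NNPP => hn; apply: hno; exists s, N; split=> // Y hY hYs.
    by apply: NNPP => hG; apply: hn; exists Y.
  case: hY => hY hYs /G_closed [L hL].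
  exists (restr Y (size s + L).+1); rewrite size_restr; split.
  - by split; [rewrite -{1}hYs; apply: prefix_restr | ]; lia.
  - by exists Y; rewrite ?size_restr.
  have hLs : L <= (size s + L).+1 by lia.
  by move=> Z /(congr1 (take L)); rewrite !take_restr //; apply: hL.
pose next N s := epsilon (inhabits s) (fun t =>
  [/\ prefix s t /\ size s < size t, meets t & forall Z, restr Z (size t) = t -> ~ G N Z]).
pose fix sq N := if N is N'.+1 then next N' (sq N') else [::].
have hsq N : meets (sq N) /\ [/\ prefix (sq N) (sq N.+1) /\ size (sq N) < size (sq N.+1),
    meets (sq N.+1) & forall Z, restr Z (size (sq N.+1)) = sq N.+1 -> ~ G N Z].
  elim: N => [|N [_ [_ hm _]]].
    have hm : meets (sq 0) by have [X hX] := P_nonempty; exists X.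
    by split=> //; apply: (epsilon_spec (inhabits _) _ (avoid 0 _ hm)).
  by split=> //; apply: (epsilon_spec (inhabits _) _ (avoid N.+1 _ hm)).
have [Y hY] : exists Y, forall N, restr Y (size (sq N)) = sq N.
  by apply: chain_limit => N; case: (hsq N) => _ [].
have PY : P Y.
  apply/hP => n; have [[Z PZ hZ] _] := hsq n.
  have hn : n <= size (sq n).
    by elim: n {PZ hZ} => // n IH; have [_ [[_ ?] _ _]] := hsq n; lia.
  by rewrite (restr_prefix (hY n) hn) -(restr_prefix hZ hn); move/hP: PZ.
have [N GNY] := G_cover PY.
by have [_ [_ _ hG]] := hsq N; apply: hG (hY N.+1) GNY.
Qed.
End Baire.

Section Pi01Determined.
Variables (C A : nat -> bool) (Q : (nat -> bool) -> Prop) (R : seq bool -> bool).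
Hypothesis R_computable : str_computable C R.
Hypothesis hQ : forall Y, Q Y <-> forall n, R (restr Y n).
Hypothesis Q_nonempty : exists Y, Q Y.
Variables (val : nat -> seq bool -> bool) (len : nat -> nat) (M : nat).
Hypothesis val_computable :
  computable_pred C (fun xs => val (nth 0 xs 1) (str_decode (nth 0 xs 0))).
Hypothesis len_computable : computable C (fun xs => len (nth 0 xs 0)).
Hypothesis A_val : forall Y, Q Y -> forall n, M <= n -> A n = val n (restr Y (len n)).

Definition admissible (t : seq bool) := all (fun j => R (take j t)) (iota 0 (size t).+1).

Lemma admissible_take t j : admissible t -> admissible (take j t).
Proof.
case: (leqP (size t) j) => hj; first by rewrite take_oversize.
move=> /allP ht; apply/allP => i; rewrite mem_iota size_takel ?(ltnW hj) // => hi.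
by rewrite take_takel; [apply: ht; rewrite mem_iota |]; lia.
Qed.

Lemma admissible_restr Y : Q Y -> forall n, admissible (restr Y n).
Proof.
move/hQ => hY n; apply/allP => j; rewrite mem_iota size_restr => hj.
by rewrite take_restr //; lia.
Qed.

Lemma admissible_path Y : (forall n, admissible (restr Y n)) -> Q Y.
Proof.
move=> hY; apply/hQ => n; have /allP /(_ n) := hY n.
by rewrite mem_iota size_restr take_oversize ?size_restr //; apply; lia.
Qed.

Definition settled (b : bool) n L :=
  forall t, size t = L + len n -> admissible t -> val n (take (len n) t) = b.

Lemma settled_eventually n : M <= n -> exists L, settled (A n) n L.
Proof.
(* Otherwise the admissible strings disagreeing with [A n] form an infinite tree; a path
   through it lies in [Q] and contradicts [A_val]. *)
move=> hn; apply: NNPP => hno.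
have bad L : exists t, [/\ size t = L + len n, admissible t & val n (take (len n) t) <> A n].
  apply: NNPP => hL; apply: hno; exists L => t ht adm.
  by apply: NNPP => hv; apply: hL; exists t.
pose B t := admissible t /\ (len n <= size t -> val n (take (len n) t) <> A n).
have B_take t j : B t -> B (take j t).
  move=> [adm hv]; split; first exact: admissible_take.
  move=> hlen; have [hj hs] : len n <= j /\ len n <= size t.
    by move: hlen; rewrite size_take; case: ltnP; lia.
  by rewrite take_takel //; apply: hv.
have B_level L : exists2 t, size t = L & B t.
  have [t [st adm hv]] := bad (L - len n).
  case: (leqP (len n) L) => hL.
    by exists t; [lia | split].
  exists (take L t); first by rewrite size_takel //; lia.
  by apply: B_take; split.
have [Y hY] := konig B_take B_level.
have QY : Q Y by apply: admissible_path => m; case: (hY m).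
have [_ hv] := hY (len n); apply: hv; first by rewrite size_restr.
by rewrite take_oversize ?size_restr // (A_val QY hn).
Qed.

Lemma settled_A n b L : M <= n -> settled b n L -> b = A n.
Proof.
move=> hn hs; have [Y QY] := Q_nonempty.
rewrite (A_val QY hn) -(hs (restr Y (L + len n))) ?size_restr ?admissible_restr //.
by rewrite take_restr // leq_addl.
Qed.

Definition settledb (b : bool) n L :=
  all (fun x => (size (str_decode x) == L + len n) ==>
     all (fun j => R (take j (str_decode x))) (iota 0 (L + len n).+1) ==>
     (val n (take (len n) (str_decode x)) == b))
    (iota 0 (2 ^ (L + len n).+1)).

Lemma settledP b n L : reflect (settled b n L) (settledb b n L).
Proof.
apply: (iffP (all_codes_sizeP (fun t => all (fun j => R (take j t)) (iota 0 (L + len n).+1)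
  ==> (val n (take (len n) t) == b)) _)) => h t ht.
  by move=> adm; apply/eqP; move: (h t ht) adm; rewrite /admissible ht => /implyP.
by apply/implyP => adm; apply/eqP/h; rewrite // /admissible ht.
Qed.

Lemma computable_settledb b F G : computable C F -> computable C G ->
  computable_pred C (fun xs => settledb b (F xs) (G xs)).
Proof.
apply: (computable_lift2 (op := fun n L => nat_of_bool (settledb b n L))).
have hlen := computable_lift1 len_computable.
have x := computable_arg C 0; have n := computable_arg C 1; have L := computable_arg C 2.
have hbound := computable_add L (hlen _ n).
have hprefixes := computable_all_iota 1 (computable_succ hbound) (str_computable_pred
  R_computable (computable_str_take (computable_arg C 1) (computable_arg C 0))).
have hval := computable_comp2 val_computable (computable_str_take x (hlen _ n)) n.
have hbody := computable_implyb (computable_str_size_eq x hbound)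
  (computable_implyb hprefixes (computable_eqb hval (computable_bool C b))).
have hcodes := computable_exp2 (computable_succ
  (computable_add (computable_arg C 1) (hlen _ (computable_arg C 0)))).
apply: computable_pred_ext (computable_all_iota 2 hcodes hbody) => xs.
rewrite /settledb /=; apply: eq_all => y; rewrite !str_codeK.
by under eq_all => j do rewrite str_codeK.
Qed.

Lemma Pi01_determined_turing_le : turing_le A C.
Proof.
pose found L ys :=
  [|| nth 0 ys 0 < M, settledb true (nth 0 ys 0) L | settledb false (nth 0 ys 0) L].
have [F hF hfound] : exists2 F, computable C F & forall ys, found (F ys) ys.
  apply: computable_search => [|ys].
    have n := computable_arg C 1; have L := computable_arg C 0.
    apply: computable_pred_ext (computable_orb (computable_ltn n (computable_const C M))
      (computable_orb (computable_settledb true n L) (computable_settledb false n L))) => xs.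
    by rewrite /found nth_behead.
  case: (ltnP (nth 0 ys 0) M) => hM; first by exists 0; rewrite /found hM.
  have [L /settledP hL] := settled_eventually hM.
  by exists L; rewrite /found; case: (A _) hL => ->; rewrite ?orbT.
apply: computable_turing_le; apply: computable_pred_ext
  (computable_patch M A (computable_settledb true (computable_arg C 0) hF)) => xs.
case: ltnP => // hM; move: (hfound xs); rewrite /found ltnNge hM /=.
case hs: settledb => /=; first by move/settledP: hs => /(settled_A hM).
by move/settledP => /(settled_A hM).
Qed.
End Pi01Determined.

Lemma not_infinite_set S : ~ infinite_set S -> exists N, forall n, N <= n -> ~~ S n.
Proof.
move=> /not_all_ex_not[N hN]; exists N => n hn.
by apply/negP => Sn; apply: hN; exists n.
Qed.

Lemma eventually_all k (Q : nat -> nat -> Prop) :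
  (forall i, i < k -> exists N, forall n, N <= n -> Q i n) ->
  exists M, forall i, i < k -> forall n, M <= n -> Q i n.
Proof.
elim: k => [|k IH] h; first by exists 0.
have [M hM] := IH (fun i hi => h i (ltnW hi)).
have [N hN] := h k (ltnSn k).
exists (M + N) => i; rewrite ltnS leq_eqVlt => /orP[/eqP -> | hi] n hn.
  by apply: hN; lia.
by apply: hM => //; lia.
Qed.

Definition pins (s : seq bool) : seq (nat * bool) :=
  [seq (j, nth false s j) | j <- iota 0 (size s)].

Lemma agrees_pins s Y : agrees (pins s) Y = (restr Y (size s) == s).
Proof.
apply/allP/eqP => [h | <- p /mapP[j]].
  apply: (@eq_from_nth _ false); rewrite size_restr // => j hj; rewrite nth_restr //.
  by apply/eqP/(h (j, nth false s j))/mapP; exists j; rewrite ?mem_iota.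
by rewrite mem_iota size_restr => hj ->; rewrite nth_restr.
Qed.

Section NoAcceptablePart.
Variables (C A : nat -> bool) (c : cond).
Hypotheses (c_cond : is_cond C c) (no_acceptable : forall i, ~ acceptable A c i).

Local Notation k := (ck c).

Definition represents (T : seq nat) (M : nat) (X : nat -> bool) :=
  forall n, M <= n -> A n = has (fun i => (i < k) && part k X i n) T.

Lemma member_represents X : cP c X -> exists T M, represents T M X.
Proof.
move=> PX; pose dense i := pbool (infinite_set (fun n => part k X i n && A n)).
have eventually_dense i : i < k -> exists N, forall n, N <= n -> part k X i n -> A n = dense i.
  move=> hi; rewrite /dense; case: pboolP => hinf.
    have [|N hN] := not_infinite_set (S := fun n => part k X i n && ~~ A n).
      by move=> hcoinf; apply: (no_acceptable (i := i)); split=> //; exists X.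
    by exists N => n /hN; rewrite negb_and negbK => /orP[/negP | ->].
  have [N hN] := not_infinite_set hinf.
  by exists N => n /hN; rewrite negb_and => /orP[/negP | /negbTE].
have [M hM] := eventually_all eventually_dense.
exists [seq i <- iota 0 k | dense i], M => n hn.
have [_ [_ [_ c_part]]] := c_cond.
apply/idP/hasP => [An | [i]]; last first.
  by rewrite mem_filter mem_iota => /andP[di _] /andP[hi Xi]; rewrite (hM i hi n hn Xi).
have [i hi Xi] := c_part X PX n; exists i; last by rewrite hi.
by rewrite mem_filter mem_iota hi -(hM i hi n hn Xi) An.
Qed.

Lemma represents_closed T M Y : ~ represents T M Y ->
  exists L, forall Z, restr Z L = restr Y L -> ~ represents T M Z.
Proof.
move=> /not_all_ex_not[n hnot]; have [hn hAn] := imply_to_and _ _ hnot.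
exists (k * n + k) => Z hZ hrep; apply: hAn; rewrite (hrep n hn).
apply: eq_has => i /=; case: ltnP => //= hi.
by have := congr1 (nth false ^~ (k * n + i)) hZ; rewrite /part !nth_restr //; lia.
Qed.

Lemma no_acceptable_turing_le : turing_le A C.
Proof.
have [_ [[R [R_comp hR]] [P_nonempty _]]] := c_cond.
pose G N X := if unpickle N is Some (T, M) then represents T M X else False.
have G_cover X : cP c X -> exists N, G N X.
  by move=> /member_represents[T [M hX]]; exists (pickle (T, M)); rewrite /G pickleK.
have G_closed N Y : ~ G N Y -> exists L, forall Z, restr Z L = restr Y L -> ~ G N Z.
  by rewrite /G; case: unpickle => [[T M] /represents_closed //|]; exists 0.
have [s [N [[Y0 PY0 hY0] hG]]] := baire_category hR P_nonempty G_cover G_closed.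
move: hG; rewrite /G; case: unpickle => [[T M] hrep|]; last by move/(_ Y0 PY0 hY0).
have [R' [R'_comp hR']] := Pi01_agrees (pins s) (ex_intro _ R (conj R_comp hR)).
have Q_nonempty : exists Y, cP c Y /\ agrees (pins s) Y by exists Y0; rewrite agrees_pins hY0.
have kn j : computable C (fun xs => k * nth 0 xs j).
  exact: computable_mul (computable_const C k) (computable_arg C j).
apply: (Pi01_determined_turing_le R'_comp hR' Q_nonempty (M := M) (len := fun n => k * n + k)
  (val := fun n t => has (fun i => (i < k) && nth false t (k * n + i)) T)).
- apply: computable_has => i; apply: computable_andb (computable_bool _ _) _.
  exact: computable_str_nth (computable_arg C 0) (computable_add (kn 1) (computable_const C i)).
- exact: computable_add (kn 0) (computable_const C k).
move=> Y [PY /[!agrees_pins] /eqP hY] n hn; rewrite (hrep Y PY hY n hn).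
by apply: eq_has => i /=; case: ltnP => //= hi; rewrite nth_restr //; lia.
Qed.

End NoAcceptablePart.

Definition refines (d c : cond) :=
  [/\ ck d = ck c, forall Y, cP d Y -> cP c Y &
    forall i, i < ck c -> prefix (csig c i) (csig d i) /\
      forall Y, cP d Y -> Defs.subset (replace (part (ck c) Y i) (csig d i))
                                (replace (part (ck c) Y i) (csig c i))].

Lemma refines_refl c : refines c c.
Proof. by split=> // i _; split=> [|Y _ n]; rewrite ?prefix_refl. Qed.

Lemma refines_trans e d c : refines e d -> refines d c -> refines e c.
Proof.
move=> [ked Ped sed] [kdc Pdc sdc]; split=> [|Y /Ped /Pdc //|i hi]; first by rewrite ked.
have [pdc subdc] := sdc i hi; rewrite -kdc in hi; have [ped subed] := sed i hi.
split; first exact: prefix_trans pdc ped.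
by move=> Y eY n hn; apply: (subdc Y (Ped _ eY)); rewrite -kdc in hn *; exact: subed eY n hn.
Qed.

Lemma refines_cond_ext d c : refines d c -> cond_ext d c.
Proof.
move=> [kdc Pdc sdc]; exists id; split=> [i|Y dY]; first by rewrite kdc.
by exists Y; [exact: Pdc | rewrite kdc => i /sdc[pre sub]; split=> //; exact: sub].
Qed.

Lemma acceptable_refines A d c i : refines d c -> acceptable A d i -> acceptable A c i.
Proof.
by move=> [kdc Pdc _] [hi [X /Pdc cX hX]]; split; [rewrite -kdc | exists X; rewrite -?kdc].
Qed.

Lemma card_in_prefix s t B : prefix s t -> card_in s B <= card_in t B.
Proof.
move=> /prefixP[u ->]; rewrite /card_in size_cat iotaD count_cat add0n.
apply: leq_trans (leq_addr _ _); apply/eq_leq/eq_in_count => n.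
by rewrite mem_iota add0n => /andP[_ hn]; rewrite nth_cat hn.
Qed.

Lemma forces_Q_refines A m d c i :
  refines d c -> i < ck c -> forces_Q A m c i -> forces_Q A m d i.
Proof.
move=> [_ _ sdc] /sdc[pdc _] [hA hnA].
by split; [apply: leq_trans hA _ | apply: leq_trans hnA _]; apply: card_in_prefix.
Qed.

Lemma count_iota_leq S N L L' : L <= L' -> count S (iota N L) <= count S (iota N L').
Proof. by move=> hL; rewrite -(subnKC hL) iotaD count_cat leq_addr. Qed.

Lemma infinite_set_count S : infinite_set S -> forall m N, exists L, m <= count S (iota N L).
Proof.
move=> hS; elim=> [|m IH] N; first by exists 0.
have [L hL] := IH N; have [n hn Sn] := hS (N + L).
exists (n - N).+1; rewrite -[(n - N).+1]addn1 iotaD count_cat (_ : N + (n - N) = n); last lia.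
rewrite /= Sn addn1 ltnS; apply: leq_trans hL (count_iota_leq _ _ _); lia.
Qed.

Section ExtendPart.
Variables (c : cond) (i : nat) (X : nat -> bool) (L : nat).
Local Notation k := (ck c).
Local Notation s := (size (csig c i)).

Definition extend_part : cond :=
  Cond k
    (fun j => if j == i then csig c i ++ mkseq (fun j => part k X i (s + j)) L else csig c j)
    (fun Y => cP c Y /\ agrees (mkseq (fun j => (k * (s + j) + i, part k X i (s + j))) L) Y).

Lemma extend_part_agree Y : cP extend_part Y ->
  forall n, s <= n < s + L -> part k Y i n = part k X i n.
Proof.
move=> [_ /allP hY] n /andP[hsn hnL]; apply/eqP.
have := hY (k * (s + (n - s)) + i, part k X i (s + (n - s))).
rewrite subnKC //; apply; apply/mapP; exists (n - s); rewrite ?subnKC // mem_iota; lia.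
Qed.

Lemma nth_extend_part n : s <= n < s + L -> nth false (csig extend_part i) n = part k X i n.
Proof.
move=> /andP[hsn hnL]; rewrite /= eqxx nth_cat ltnNge hsn nth_mkseq; last lia.
by rewrite subnKC.
Qed.

Lemma extend_part_cond C : is_cond C c -> cP c X -> is_cond C extend_part.
Proof.
move=> [k_pos [Pi01_P [_ c_part]]] PX; split=> //; split; first exact: Pi01_agrees.
split; first by exists X; split=> //; apply/allP => p /mapP[j _ ->] /=.
by move=> Y [PY _]; apply: c_part.
Qed.

Lemma extend_part_refines : refines extend_part c.
Proof.
split=> // [Y [] //|j hj] /=.
case: eqP => [-> | _]; last by split=> [|Y _ n]; rewrite ?prefix_refl.
split=> [|Y dY n]; first exact: prefix_prefix.
rewrite /replace size_cat size_mkseq; case: (ltnP n s) => hs.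
  by rewrite ltn_addr // nth_cat hs.
case: ltnP => // hL.
have hn : s <= n < s + L by rewrite hs.
by move: (nth_extend_part hn); rewrite /= eqxx => ->; rewrite (extend_part_agree dY hn).
Qed.

Lemma card_in_extend_part B :
  count (fun n => part k X i n && B n) (iota s L) <= card_in (csig extend_part i) B.
Proof.
rewrite /card_in /= eqxx size_cat size_mkseq iotaD count_cat add0n.
apply: leq_trans (leq_addl _ _); apply/eq_leq/eq_in_count => n.
by rewrite mem_iota => hn; rewrite -(nth_extend_part hn) /= eqxx.
Qed.

End ExtendPart.

Lemma force_acceptable_part C A m c i : is_cond C c -> acceptable A c i ->
  exists d, [/\ is_cond C d, refines d c & forces_Q A m d i].
Proof.
move=> c_cond [hi [X PX [infA infnA]]]; set s := size (csig c i).
have [LA hLA] := infinite_set_count infA m s.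
have [LnA hLnA] := infinite_set_count infnA m s.
exists (extend_part c i X (LA + LnA)); split.
- exact: extend_part_cond.
- exact: extend_part_refines.
split; apply: leq_trans (card_in_extend_part _ _ _ _ _).
  exact: leq_trans hLA (count_iota_leq _ _ (leq_addr _ _)).
exact: leq_trans hLnA (count_iota_leq _ _ (leq_addl _ _)).
Qed.

Lemma force_acceptable_parts C A m c : is_cond C c ->
  exists d, [/\ is_cond C d, refines d c & forall i, acceptable A d i -> forces_Q A m d i].
Proof.
move=> c_cond.
suff /(_ (ck c) (leqnn _)) [d [d_cond dc hd]] : forall j, j <= ck c -> exists d,
    [/\ is_cond C d, refines d c & forall i, i < j -> acceptable A d i -> forces_Q A m d i].
  exists d; split=> // i acc; apply: (hd i _ acc).
  by case: dc => <- _ _; case: acc.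
elim=> [|j IH] hj; first by exists c; split=> //; apply: refines_refl.
have [d [d_cond dc hd]] := IH (ltnW hj).
have [acc | nacc] := classic (acceptable A d j); last first.
  by exists d; split=> // i; rewrite ltnS leq_eqVlt => /orP[/eqP -> /nacc | /hd].
have [e [e_cond ed he]] := force_acceptable_part m d_cond acc.
exists e; split=> //; first exact: refines_trans ed dc.
move=> i; rewrite ltnS leq_eqVlt => /orP[/eqP -> // | hi] acc_i.
apply: forces_Q_refines ed _ (hd i hi (acceptable_refines ed acc_i)).
by case: dc => -> _ _; apply: ltn_trans hi hj.
Qed.

Theorem lemma4p1 (C A : nat -> bool) :
  ~ turing_le A C ->
  (forall c : cond, is_cond C c -> exists i, acceptable A c i) /\
  (forall (c : cond) (m : nat), is_cond C c ->
     exists d : cond, is_cond C d /\ cond_ext d c /\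
       forall i, acceptable A d i -> forces_Q A m d i).
Proof.
move=> not_le; split=> [c c_cond | c m c_cond].
  apply: NNPP => no_acc; apply/not_le/(no_acceptable_turing_le c_cond) => i acc.
  by apply: no_acc; exists i.
have [d [d_cond dc hd]] := force_acceptable_parts A m c_cond.
by exists d; split=> //; split=> //; apply: refines_cond_ext.
Qed.
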